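(* Let $G=(V,E)$ be a graph on $V=\{1,\dots,n\}$ and $(\tilde g,\theta)$ a nominal configuration such that each of the sets $\{\tilde p^x_{i,\theta}\}_{i\in V}$, $\{\tilde p^y_{i,\theta}\}_{i\in V}$, $\{\tilde\phi_i\}_{i\in V}$ affinely spans $\mathbb R$. Then $\mathrm{null}(M(G,\tilde g,\theta))=\Pi(\tilde g,\theta)$ if and only if $\mathrm{rank}(M(G,\tilde g,\theta))=3n-6$.
   Context: $E\subseteq\{(i,k):i\ne k\}$, $(i,k)\in E$ means agent $k$ measures agent $i$. $R(\theta)$ is the $2\times2$ rotation by $\theta$, $\Theta=\mathrm{diag}(R(\theta),1)$. $\tilde g_i=[\tilde p_i^\top,\tilde\phi_i]^\top\in\mathbb R^3$, $\Theta^\top\tilde g_i=[\tilde p^x_{i,\theta},\tilde p^y_{i,\theta},\tilde\phi_i]^\top$; $\tilde p^x_{uv,\theta}=\tilde p^x_{u,\theta}-\tilde p^x_{v,\theta}$, similarly $y$, $\tilde\phi_{uv}=\tilde\phi_u-\tilde\phi_v$; $w_{uv}=\mathrm{diag}(\tilde p^x_{uv,\theta},\tilde p^y_{uv,\theta},\tilde\phi_{uv})$, $W_{uv}=w_{uv}\Theta^\top$. $C=\{(i,j,k)\in V^3:(i,k),(j,k)\in E,\ i<j\}$. $M(G,\tilde g,\theta)\in\mathbb R^{3n\times3n}$: the $k$-th $3$-block of $Mg$ is $\sum_{(i,j,k)\in C}(W_{jk}(g_i-g_k)+W_{ki}(g_j-g_k))$. $\Pi(\tilde g,\theta)=\{g\in\mathbb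 R^{3n}:g_i=\tau+\Theta\,\mathrm{diag}(s)\Theta^\top\tilde g_i\ \forall i,\ s,\tau\in\mathbb R^3\}$. A set of reals affinely spans $\mathbb R$ iff it contains two distinct elements. *)

From HB Require Import structures.
From mathcomp Require Import all_boot all_order all_algebra.
From mathcomp Require Import reals trigo.
Set Implicit Arguments. Unset Strict Implicit. Unset Printing Implicit Defensive.
Import Order.TTheory GRing.Theory Num.Theory.
Local Open Scope ring_scope.

(* Agents are indexed by 'I_n (0-based version of {1,..,n}).
   A vector g in R^{3n} is a column vector 'cV_(n*3); its i-th 3-block
   (agent i) occupies entries 3*i, 3*i+1, 3*i+2. *)

Lemma idx_lt (n : nat) (i : 'I_n) (a : 'I_3) : (i * 3 + a < n * 3)%N.
Proof.
have Hi := ltn_ord i; have Ha := ltn_ord a.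
rewrite (leq_trans (n := i * 3 + 3)) ?ltn_add2l //.
by rewrite -mulSnr leq_mul2r ltn_ord orbT.
Qed.

Definition idx (n : nat) (i : 'I_n) (a : 'I_3) : 'I_(n * 3) := Ordinal (idx_lt i a).

Lemma blk_lt (n : nat) (r : 'I_(n * 3)) : (r %/ 3 < n)%N.
Proof. by rewrite ltn_divLR // ltn_ord. Qed.

Lemma cmp_lt (n : nat) (r : 'I_(n * 3)) : (r %% 3 < 3)%N.
Proof. by rewrite ltn_pmod. Qed.

Definition blk (n : nat) (r : 'I_(n * 3)) : 'I_n := Ordinal (blk_lt r).
Definition cmp (n : nat) (r : 'I_(n * 3)) : 'I_3 := Ordinal (cmp_lt r).

Definition block (R : ringType) (n : nat) (g : 'cV[R]_(n * 3)) (i : 'I_n) : 'cV[R]_3 :=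
  \col_(a < 3) g (idx i a) 0.

Definition Theta (R : realType) (th : R) : 'M[R]_3 :=
  \matrix_(a < 3, b < 3)
    match nat_of_ord a, nat_of_ord b with
    | 0, 0 => cos th | 0, 1 => - sin th
    | 1, 0 => sin th | 1, 1 => cos th
    | 2, 2 => 1 | _, _ => 0
    end.

Section Config.
Variables (R : realType) (n : nat) (gt : 'I_n -> 'cV[R]_3) (th : R).

(* Theta^T gt_i = [p^x_{i,theta}, p^y_{i,theta}, phi_i]^T *)
Definition gtheta (i : 'I_n) : 'cV[R]_3 := (Theta th)^T *m gt i.

Definition w_mx (u v : 'I_n) : 'M[R]_3 := diag_mx (gtheta u - gtheta v)^T.
Definition W_mx (u v : 'I_n) : 'M[R]_3 := w_mx u v *m (Theta th)^T.

Variable E : rel 'I_n.  (* E k' k : (k',k) in E, i.e. agent k measures agent k' *)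

(* (k,l) 3x3 block of M: coefficient of g_l in the k-th block of M g,
   where the k-th block of M g is
   sum_{(i,j,k) in C} (W_jk (g_i - g_k) + W_ki (g_j - g_k)),
   C = {(i,j,k) : (i,k),(j,k) in E, i < j}. *)
Definition Mblock (k l : 'I_n) : 'M[R]_3 :=
  \sum_(i < n) \sum_(j < n | (i < j)%N && E i k && E j k)
     ((l == i)%:R *: W_mx j k + (l == j)%:R *: W_mx k i
      - (l == k)%:R *: (W_mx j k + W_mx k i)).

Definition Mmat : 'M[R]_(n * 3) :=
  \matrix_(r, c) Mblock (blk r) (blk c) (cmp r) (cmp c).

Definition Pi_set (g : 'cV[R]_(n * 3)) : Prop :=
  exists s tau : 'cV[R]_3, forall i : 'I_n,
    block g i = tau + Theta th *m diag_mx s^T *m (Theta th)^T *m gt i.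

End Config.

(* a set {x_i}_{i in V} of reals affinely spans R iff it has two distinct elements *)
Definition affinely_spans_R (R : realType) (n : nat) (x : 'I_n -> R) : Prop :=
  exists i j : 'I_n, x i != x j.

From HB Require Import structures.
From mathcomp Require Import all_boot all_order all_algebra.
From mathcomp Require Import reals trigo.
From mathcomp Require Import zify ring lra.
Set Implicit Arguments. Unset Strict Implicit. Unset Printing Implicit Defensive.
Import Order.TTheory GRing.Theory Num.Theory.
Local Open Scope ring_scope.

(** Π is the image of the linear map (s, τ) ↦ (τ + Θ diag(s) Θᵀ g̃_i)_i, which
    is injective because each coordinate of Θᵀ g̃ takes two distinct values;
    hence Π is 6-dimensional.  Every element of Π lies in the null space of M:
    the diagonal matrices w_uv commute with diag(s), and on each coordinate
    (x_j - x_k)(x_i - x_k) + (x_k - x_i)(x_j - x_k) = 0.  So null M = Π iff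
    dim null M = 6, i.e. iff rank M = 3n - 6 by rank-nullity. *)

Section NullSpace.
Variables (F : fieldType) (m p r : nat) (M : 'M[F]_(m, p)) (B : 'M[F]_(r, p)).

Lemma mulmx_col_eq0_kermx (g : 'cV[F]_p) : M *m g = 0 <-> (g^T <= kermx M^T)%MS.
Proof.
split=> [Mg0 | /sub_kermxP]; first by apply/sub_kermxP; rewrite -trmx_mul Mg0 trmx0.
by rewrite -trmx_mul => /(congr1 trmx); rewrite trmxK trmx0.
Qed.

Lemma rowspace_sub_kermx : (forall g : 'cV[F]_p, (g^T <= B)%MS -> M *m g = 0) ->
  (B <= kermx M^T)%MS.
Proof.
move=> nullB; apply/row_subP => q; rewrite -[row q B]trmxK.
by apply/mulmx_col_eq0_kermx/nullB; rewrite trmxK row_sub.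
Qed.

Hypotheses (freeB : row_free B) (nullB : forall g : 'cV[F]_p, (g^T <= B)%MS -> M *m g = 0).

Lemma null_eq_rowspaceE :
  (forall g : 'cV[F]_p, M *m g = 0 <-> (g^T <= B)%MS) <-> \rank M = (p - r)%N.
Proof.
have BK := rowspace_sub_kermx nullB.
have rB : \rank B = r by apply/eqP.
have rK : \rank (kermx M^T) = (p - \rank M)%N by rewrite mxrank_ker mxrank_tr.
have rBp : (r <= p)%N by rewrite -rB rank_leq_col.
have rMp := rank_leq_col M.
split=> [nullE | rankM].
  have KB : (kermx M^T <= B)%MS.
    apply/row_subP => q; rewrite -[row q _]trmxK.
    by apply/nullE/mulmx_col_eq0_kermx; rewrite trmxK row_sub.
  have : \rank (kermx M^T) = \rank B by apply/eqP; rewrite eqn_leq !mxrankS.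
  by rewrite rK rB; lia.
have KB : (kermx M^T <= B)%MS.
  by rewrite -(mxrank_leqif_sup BK).2 rB rK rankM; apply/eqP; lia.
move=> g; split=> [/mulmx_col_eq0_kermx gK | /nullB //].
exact: submx_trans gK KB.
Qed.

End NullSpace.

Lemma sumr_delta_scale (R : pzRingType) (V : lmodType R) (I : finType) (i : I)
    (X : I -> V) :
  \sum_l (l == i)%:R *: X l = X i.
Proof.
rewrite (bigD1 i) //= eqxx scale1r big1 ?addr0 // => l /negbTE ->.
by rewrite scale0r.
Qed.

Lemma affinely_spans_R_affine_eq0 (R : realType) (n : nat) (x : 'I_n -> R) (c s : R) :
  affinely_spans_R x -> (forall i, c + s * x i = 0) -> s = 0 /\ c = 0.
Proof.
move=> [i [j xij]] affine0.
have s0 : s = 0.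
  have : s * (x i - x j) = (c + s * x i) - (c + s * x j) by ring.
  by rewrite !affine0 subrr => /eqP; rewrite mulf_eq0 subr_eq0 (negbTE xij) orbF => /eqP.
by split=> //; move: (affine0 i); rewrite s0 mul0r addr0.
Qed.

Lemma trmx_Theta_mulK (R : realType) (th : R) : (Theta th)^T *m Theta th = 1%:M.
Proof.
have circle := cos2Dsin2 th; rewrite !expr2 in circle.
apply/matrixP => a b; rewrite !mxE !big_ord_recr big_ord0 /= !mxE.
case: a => [[|[|[|a]]] Ha] //; case: b => [[|[|[|b]]] Hb] //=;
  rewrite ?mulr0 ?mul0r ?addr0 ?add0r ?mulr1 //; lra.
Qed.

Lemma Theta_mul_trmxK (R : realType) (th : R) : Theta th *m (Theta th)^T = 1%:M.
Proof. exact: mulmx1C (trmx_Theta_mulK th). Qed.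

Section Blocks.
Variable n : nat.

Lemma blk_idx (i : 'I_n) (a : 'I_3) : blk (idx i a) = i.
Proof. by apply: val_inj; rewrite /= divnMDl // divn_small ?addn0. Qed.

Lemma cmp_idx (i : 'I_n) (a : 'I_3) : cmp (idx i a) = a.
Proof. by apply: val_inj; rewrite /= modnMDl modn_small. Qed.

Lemma idx_blk_cmp (c : 'I_(n * 3)) : idx (blk c) (cmp c) = c.
Proof. by apply: val_inj; rewrite /= -divn_eq. Qed.

Lemma big_idx (R : nmodType) (F : 'I_(n * 3) -> R) :
  \sum_c F c = \sum_(l < n) \sum_(b < 3) F (idx l b).
Proof.
rewrite pair_big (reindex (fun p : 'I_n * 'I_3 => idx p.1 p.2)) //=.
exists (fun c => (blk c, cmp c)) => [[i a] _ | c _] /=.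
  by rewrite blk_idx cmp_idx.
by rewrite idx_blk_cmp.
Qed.

Lemma block_eq0 (R : nzRingType) (g : 'cV[R]_(n * 3)) :
  (forall i, block g i = 0) -> g = 0.
Proof.
move=> g0; apply/matrixP => c z; rewrite (ord1 z).
by move/matrixP/(_ (cmp c) 0): (g0 (blk c)); rewrite !mxE idx_blk_cmp.
Qed.

End Blocks.

Section Config.
Variables (R : realType) (n : nat) (E : rel 'I_n) (gt : 'I_n -> 'cV[R]_3) (th : R).
Local Notation T := (Theta th).
Local Notation W := (W_mx gt th).
Local Notation M := (Mmat gt th E).

Lemma block_Mmat_mul (g : 'cV[R]_(n * 3)) k :
  block (M *m g) k =
  \sum_(i < n) \sum_(j < n | (i < j)%N && E i k && E j k)
     (W j k *m (block g i - block g k) + W k i *m (block g j - block g k)).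
Proof.
have -> : block (M *m g) k = \sum_l Mblock gt th E k l *m block g l.
  apply/matrixP => a z; rewrite (ord1 z) !mxE summxE big_idx.
  apply: eq_bigr => l _; rewrite !mxE; apply: eq_bigr => b _.
  by rewrite !mxE !blk_idx !cmp_idx.
under eq_bigr => l _ do rewrite mulmx_suml; rewrite exchange_big.
apply: eq_bigr => i _.
under eq_bigr => l _ do rewrite mulmx_suml; rewrite exchange_big.
apply: eq_bigr => j _.
under eq_bigr => l _ do rewrite mulmxBl mulmxDl -!scalemxAl.
rewrite sumrB big_split /= !sumr_delta_scale.
by rewrite !mulmxBr mulmxDl opprD addrACA.
Qed.

Lemma W_mx_mul_Pi (s : 'cV[R]_3) u v i k :
  W u v *m (T *m diag_mx s^T *m T^T *m (gt i - gt k)) =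
  w_mx gt th u v *m diag_mx s^T *m (gtheta gt th i - gtheta gt th k).
Proof.
rewrite /W_mx /gtheta -mulmxBr -!mulmxA; congr (_ *m _).
by rewrite !mulmxA trmx_Theta_mulK mul1mx.
Qed.

Lemma Pi_sub_null (g : 'cV[R]_(n * 3)) : Pi_set gt th g -> M *m g = 0.
Proof.
move=> [s [tau gPi]]; apply: block_eq0 => k.
have subDl (a b : 'cV[R]_3) : tau + a - (tau + b) = a - b.
  by rewrite opprD addrACA subrr add0r.
rewrite block_Mmat_mul big1 // => i _; rewrite big1 // => j _.
rewrite !gPi !subDl -!mulmxBr !W_mx_mul_Pi.
rewrite /w_mx -!mulmxA !mul_diag_mx; apply/matrixP => a z.
by rewrite (ord1 z) !mxE; ring.
Qed.

(* The rows of [Pi_basis] are the images of the six coordinates of (s, τ). *)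
Definition Pi_basis : 'M[R]_(3 + 3, n * 3) :=
  col_mx (\matrix_(b, c) (T (cmp c) b * gtheta gt th (blk c) b 0))
         (\matrix_(b, c) (b == cmp c)%:R).

Lemma Pi_basis_mul (s tau : 'cV[R]_3) i a :
  (row_mx s^T tau^T *m Pi_basis) 0 (idx i a) =
  (tau + T *m diag_mx s^T *m T^T *m gt i) a 0.
Proof.
rewrite mul_row_col -!mulmxA mul_diag_mx !mxE addrC; congr (_ + _).
  rewrite (bigD1 a) //= big1 => [|b /negbTE ba]; rewrite !mxE cmp_idx ?eqxx ?mulr1 ?addr0 //.
  by rewrite ba mulr0.
by apply: eq_bigr => b _; rewrite !mxE blk_idx cmp_idx /gtheta; ring.
Qed.

Lemma Pi_setE (g : 'cV[R]_(n * 3)) : Pi_set gt th g <-> (g^T <= Pi_basis)%MS.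
Proof.
split=> [[s [tau gPi]] | /submxP[D gD]].
  apply/submxP; exists (row_mx s^T tau^T); apply/matrixP => z c.
  by rewrite (ord1 z) -(idx_blk_cmp c) Pi_basis_mul -gPi !mxE.
exists (lsubmx D)^T, (rsubmx D)^T => i; apply/matrixP => a z.
by rewrite (ord1 z) -Pi_basis_mul !trmxK hsubmxK -gD !mxE.
Qed.

Lemma Pi_basis_free :
  (forall a : 'I_3, affinely_spans_R (fun i => gtheta gt th i a 0)) -> row_free Pi_basis.
Proof.
move=> span; apply: inj_row_free => v v0.
rewrite -[v]hsubmxK -[lsubmx v]trmxK -[rsubmx v]trmxK in v0 *.
move: (lsubmx v)^T (rsubmx v)^T v0 => s tau v0.
have Pi0 i : tau + T *m diag_mx s^T *m T^T *m gt i = 0.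
  by apply/matrixP => b z; rewrite (ord1 z) -Pi_basis_mul v0 !mxE.
have affine0 a i : (T^T *m tau) a 0 + s a 0 * gtheta gt th i a 0 = 0.
  move: (congr1 (mulmx T^T) (Pi0 i)).
  rewrite mulmxDr !mulmxA trmx_Theta_mulK mul1mx mulmx0 -mulmxA -/(gtheta gt th i).
  move: (T^T *m tau) (gtheta gt th i) => u x.
  by rewrite mul_diag_mx => /matrixP/(_ a 0); rewrite !mxE.
have s_tau0 a := affinely_spans_R_affine_eq0 (span a) (affine0 a).
have s0 : s = 0 by apply/matrixP => a z; rewrite (ord1 z) mxE (s_tau0 a).1.
have tau0 : tau = 0.
  have Ttau0 : T^T *m tau = 0 by apply/matrixP => a z; rewrite (ord1 z) (s_tau0 a).2 mxE.
  by rewrite -[tau]mul1mx -(Theta_mul_trmxK th) -mulmxA Ttau0 mulmx0.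
by rewrite s0 tau0 !trmx0 row_mx0.
Qed.

End Config.

Theorem lemma7 (R : realType) (n : nat) (E : rel 'I_n)
  (HE : forall i k : 'I_n, E i k -> i != k)
  (gt : 'I_n -> 'cV[R]_3) (th : R)
  (Hspan : forall a : 'I_3, affinely_spans_R (fun i => gtheta gt th i a 0)) :
  (forall g : 'cV[R]_(n * 3), Mmat gt th E *m g = 0 <-> Pi_set gt th g)
  <-> \rank (Mmat gt th E) = (n * 3 - 6)%N.
Proof.
have nullPi (g : 'cV[R]_(n * 3)) : (g^T <= Pi_basis gt th)%MS -> Mmat gt th E *m g = 0.
  by move/(Pi_setE gt th g); apply: Pi_sub_null.
rewrite -(null_eq_rowspaceE (Pi_basis_free Hspan) nullPi).
by split=> nullE g; split=> [/nullE/(Pi_setE gt th g) | /(Pi_setE gt th g)/nullE].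
Qed.
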